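(* Let $G$ be an unweighted digraph of order $n$ without loops, with $b$ reciprocal pairs of edges (pairs $\{(i,j),(j,i)\}\subseteq E$), and let $0\le\tau\le1$. Then \[\det\bigl[I-t(\tau B+(1-\tau)W)\bigr]=(1-\tau^2t^2)^{\,b-n}\det M_\tau(t),\] where $M_\tau(t)=I-At+(D-\tau I)\tau t^2+(A-S)\tau^2t^3$.
   Context: $G=(V,E)$ with $V=\{1,\dots,n\}$, $m=\#E$, adjacency matrix $A$, $S=A\circ A^T$, $D=\mathrm{diag}(\mathrm{diag}(A^2))$. The line graph adjacency matrix $W\in\{0,1\}^{m\times m}$ is indexed by edges, with $W_{ef}=1$ iff the target vertex of $e$ equals the source vertex of $f$; equivalently $W=RL^T$ where $L,R\in\{0,1\}^{m\times n}$ are the source and target matrices ($L_{ej}=1$ iff $e=(j,\cdot)$, $R_{ej}=1$ iff $e=(\cdot,j)$). The Hashimoto matrix is $B=W-\Delta$, where $\Delta=W\circ W^T$ (so $\Delta_{ef}=1$ iff $f$ is the reverse edge of $e$); thus $B_{ef}=1$ iff $e=(i,j)$, $f=(j,k)$ with $k\ne i$. *)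

From HB Require Import structures.
From mathcomp Require Import all_boot all_order all_algebra.
Set Implicit Arguments. Unset Strict Implicit. Unset Printing Implicit Defensive.
Import Order.TTheory GRing.Theory Num.Theory.
Local Open Scope ring_scope.

(* A digraph on V = {0,...,n-1} is given by its edge set E : {set 'I_n * 'I_n};
   the edge (i,j) goes from source i to target j. *)

Definition loopless (n : nat) (E : {set 'I_n * 'I_n}) : Prop :=
  forall i : 'I_n, (i, i) \notin E.

Definition edge (n : nat) (E : {set 'I_n * 'I_n}) (e : 'I_#|E|) : 'I_n * 'I_n :=
  @enum_val _ (mem E) e.
Arguments edge {n} E e.

Definition adjmx (R : nzRingType) (n : nat) (E : {set 'I_n * 'I_n}) : 'M[R]_n :=
  \matrix_(i, j) ((i, j) \in E)%:R.

Definition recipmx (R : nzRingType) (n : nat) (E : {set 'I_n * 'I_n}) : 'M[R]_n :=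
  \matrix_(i, j) (adjmx R E i j * (adjmx R E)^T i j).

Definition diagA2 (R : nzRingType) (n : nat) (E : {set 'I_n * 'I_n}) : 'M[R]_n :=
  \matrix_(i, j) ((i == j)%:R * (adjmx R E *m adjmx R E) i j).

Definition linemx (R : nzRingType) (n : nat) (E : {set 'I_n * 'I_n}) : 'M[R]_#|E| :=
  \matrix_(e < #|E|, f < #|E|) ((edge E e).2 == (edge E f).1)%:R.

Definition revmx (R : nzRingType) (n : nat) (E : {set 'I_n * 'I_n}) : 'M[R]_#|E| :=
  \matrix_(e < #|E|, f < #|E|) (linemx R E e f * (linemx R E)^T e f).

Definition hashimoto (R : nzRingType) (n : nat) (E : {set 'I_n * 'I_n}) : 'M[R]_#|E| :=
  linemx R E - revmx R E.

Definition nrecip (n : nat) (E : {set 'I_n * 'I_n}) : nat :=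
  #|[set p : 'I_n * 'I_n | [&& (p.1 < p.2)%N, p \in E & (p.2, p.1) \in E]]|.

Definition Mtau (R : comNzRingType) (n : nat) (E : {set 'I_n * 'I_n}) (tau t : R)
  : 'M[R]_n :=
  1%:M - t *: adjmx R E + (tau * t ^+ 2) *: (diagA2 R E - tau%:M)
  + (tau ^+ 2 * t ^+ 3) *: (adjmx R E - recipmx R E).

From HB Require Import structures.
From mathcomp Require Import all_boot all_order all_algebra.
From mathcomp Require Import ring.
Set Implicit Arguments. Unset Strict Implicit. Unset Printing Implicit Defensive.
Import Order.TTheory GRing.Theory Num.Theory.
Local Open Scope ring_scope.

(* Let L, R be the source and target incidence matrices, so W = R L^T, A = L^T R,
   and put s = tau t.  As tau B + (1 - tau) W = W - tau Delta, the pencil is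
   P - t R L^T with P = I + s Delta.  Delta pairs each reciprocal edge with its
   reverse, so Delta^2 = Q (the diagonal projection on reciprocal edges) and
   Delta Q = Q Delta = Delta; hence X = (1 - s^2)(I - Q) + Q - s Delta satisfies
   X P = (1 - s^2) I, and block elimination gives
     (1 - s^2)^n det (P - t R L^T) = det P * det ((1 - s^2) I - t L^T X R),
   where L^T Q R = S and L^T Delta R = D turn the last factor into M_tau(t).
   Finally det P = (1 - s^2)^b: conjugating by edge signs negates Delta, so
   (det P)^2 = det (I - s^2 Q) = (1 - s^2)^(2b), and the sign is fixed at s = 0.
   Dividing by (1 - s^2)^n is done in K[t] to include the roots of 1 - s^2. *)

Section DeltaSums.
Variables (R : nzSemiRingType) (T : finType).

Lemma sum_delta_l (a : T) (F : T -> R) : \sum_j (a == j)%:R * F j = F a.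
Proof.
rewrite (bigD1 a) //= eqxx mul1r big1 ?addr0 // => j /negbTE.
by rewrite eq_sym => ->; rewrite mul0r.
Qed.

Lemma sum_delta_r (a : T) (F : T -> R) : \sum_j F j * (j == a)%:R = F a.
Proof.
rewrite (bigD1 a) //= eqxx mulr1 big1 ?addr0 // => j /negbTE ->.
by rewrite mulr0.
Qed.

Lemma sum_in_delta (A : {pred T}) (a : T) (F : T -> R) :
  \sum_(x in A) (x == a)%:R * F x = (a \in A)%:R * F a.
Proof.
rewrite big_mkcond /= -(sum_delta_l a (fun x => (x \in A)%:R * F x)).
apply: eq_bigr => x _.
by case: (x \in A); rewrite ?mul1r ?mul0r ?mulr0 // eq_sym.
Qed.

End DeltaSums.

Definition rev_pair {T : Type} (p : T * T) : T * T := (p.2, p.1).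

Lemma rev_pairK {T : Type} : involutive (@rev_pair T).
Proof. by case. Qed.

Section Edges.
Variables (n : nat) (E : {set 'I_n * 'I_n}).

Lemma edge_in (e : 'I_#|E|) : edge E e \in E.
Proof. exact: enum_valP. Qed.

Lemma edge_inj : injective (edge E).
Proof. exact: enum_val_inj. Qed.

Lemma big_edge {R : Type} {idx : R} {op : Monoid.com_law idx}
    (F : 'I_n * 'I_n -> R) :
  \big[op/idx]_(e < #|E|) F (edge E e) = \big[op/idx]_(x in E) F x.
Proof. by rewrite [RHS]big_enum_val. Qed.

End Edges.

Lemma det_subr_mulmx (R : comNzRingType) (m k : nat) (x : R) (P X : 'M[R]_m)
    (U : 'M[R]_(m, k)) (V : 'M[R]_(k, m)) :
  X *m P = x%:M -> x ^+ k * \det (P - U *m V) = \det P * \det (x%:M - V *m X *m U).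
Proof.
move=> XP.
have elim_U : block_mx 1%:M U 0 1%:M *m block_mx (P - U *m V) 0 V 1%:M
              = block_mx P U V 1%:M.
  by rewrite mulmx_block !mul1mx !mul0mx !mulmx1 !add0r subrK.
have elim_V : block_mx 1%:M 0 (- (V *m X)) x%:M *m block_mx P U V 1%:M
              = block_mx P U 0 (x%:M - V *m X *m U).
  rewrite mulmx_block !mul1mx !mul0mx !mulmx1 !addr0 !mulNmx.
  by rewrite -[V *m X *m P]mulmxA XP mul_mx_scalar mul_scalar_mx addNr addrC.
have := congr1 determinant elim_V.
rewrite det_mulmx det_lblock det_ublock det1 mul1r det_scalar => <-.
by rewrite -elim_U det_mulmx det_ublock det_lblock !det1 !mul1r mulr1.
Qed.

Section Incidence.
Variables (R : comNzRingType) (n : nat) (E : {set 'I_n * 'I_n}).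
Local Notation m := #|E|.

Definition srcmx : 'M[R]_(m, n) := \matrix_(e, j) ((edge E e).1 == j)%:R.
Definition tgtmx : 'M[R]_(m, n) := \matrix_(e, j) ((edge E e).2 == j)%:R.

Definition reciprocal (e : 'I_m) : bool := rev_pair (edge E e) \in E.
Definition recipdiag : 'M[R]_m := diag_mx (\row_e (reciprocal e)%:R).

Lemma natr_pair_eq (p q : 'I_n * 'I_n) :
  (p.1 == q.1)%:R * (p.2 == q.2)%:R = (p == q)%:R :> R.
Proof. by case: p q => [a b] [c d]; rewrite xpair_eqE -natrM mulnb. Qed.

Lemma revmxE e f : revmx R E e f = (edge E f == rev_pair (edge E e))%:R.
Proof. by rewrite !mxE -natr_pair_eq /= eq_sym. Qed.

Lemma revmx_neq0 e f : revmx R E e f != 0 -> edge E f = rev_pair (edge E e).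
Proof. by rewrite revmxE; case: (edge E f =P _) => // _; rewrite eqxx. Qed.

Lemma recipdiagE e f : recipdiag e f = (reciprocal e)%:R * (e == f)%:R.
Proof. by rewrite !mxE mulr_natr. Qed.

Lemma linemx_factor : linemx R E = tgtmx *m srcmx^T.
Proof.
apply/matrixP => e f; rewrite !mxE.
under eq_bigr do rewrite !mxE.
by rewrite sum_delta_l eq_sym.
Qed.

Lemma adjmx_factor : srcmx^T *m tgtmx = adjmx R E.
Proof.
apply/matrixP => i j; rewrite !mxE.
under eq_bigr do rewrite !mxE.
rewrite (big_edge E (fun x => (x.1 == i)%:R * (x.2 == j)%:R)).
under eq_bigr do rewrite (natr_pair_eq _ (i, j)) -[_%:R]mulr1.
by rewrite sum_in_delta mulr1.
Qed.

Lemma revmx_sqr : revmx R E *m revmx R E = recipdiag.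
Proof.
apply/matrixP => e f; rewrite mxE recipdiagE.
under eq_bigr do rewrite !revmxE.
rewrite (big_edge E (fun x =>
  (x == rev_pair (edge E e))%:R * (edge E f == rev_pair x)%:R)).
by rewrite sum_in_delta rev_pairK (inj_eq (@edge_inj _ E)) eq_sym.
Qed.

Lemma revmx_recipdiag : revmx R E *m recipdiag = revmx R E.
Proof.
apply/matrixP => e f; rewrite mul_mx_diag [LHS]mxE [X in _ * X]mxE.
have [->|/revmx_neq0 ef] := eqVneq (revmx R E e f) 0; first by rewrite mul0r.
by rewrite /reciprocal ef rev_pairK edge_in mulr1.
Qed.

Lemma recipdiag_revmx : recipdiag *m revmx R E = revmx R E.
Proof.
apply/matrixP => e f; rewrite mul_diag_mx [LHS]mxE [X in X * _]mxE.
have [->|/revmx_neq0 ef] := eqVneq (revmx R E e f) 0; first by rewrite mulr0.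
by rewrite /reciprocal -ef edge_in mul1r.
Qed.

Lemma recipmx_factor : srcmx^T *m recipdiag *m tgtmx = recipmx R E.
Proof.
apply/matrixP => i j; rewrite mul_mx_diag !mxE.
under eq_bigr do rewrite !mxE mulrAC.
rewrite (big_edge E (fun x =>
  (x.1 == i)%:R * (x.2 == j)%:R * (rev_pair x \in E)%:R)).
under eq_bigr do rewrite (natr_pair_eq _ (i, j)).
by rewrite sum_in_delta.
Qed.

Lemma srcmx_revmx :
  srcmx^T *m revmx R E = \matrix_(i, f) ((reciprocal f)%:R * ((edge E f).2 == i)%:R).
Proof.
apply/matrixP => i f; rewrite !mxE.
under eq_bigr do rewrite revmxE !mxE.
rewrite (big_edge E (fun x => (x.1 == i)%:R * (edge E f == rev_pair x)%:R)).
have flip x : (edge E f == rev_pair x) = (x == rev_pair (edge E f)).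
  by apply/eqP/eqP => ->; rewrite rev_pairK.
under eq_bigr do rewrite flip mulrC.
by rewrite sum_in_delta.
Qed.

Lemma diagA2_factor : srcmx^T *m revmx R E *m tgtmx = diagA2 R E.
Proof.
apply/matrixP => i j; rewrite srcmx_revmx !mxE.
under eq_bigr do rewrite !mxE.
rewrite (big_edge E (fun x =>
  (rev_pair x \in E)%:R * (x.2 == i)%:R * (x.2 == j)%:R)).
under [in RHS]eq_bigr do rewrite !mxE.
have [<-|ij] := eqVneq i j; last first.
  rewrite mul0r big1 // => x _.
  by case: (x.2 =P i) => [->|_]; rewrite ?(negbTE ij) ?mulr0 ?mul0r.
rewrite mul1r (eq_bigr (fun x => (rev_pair x \in E)%:R * (x.2 == i)%:R)); last first.
  by move=> x _; rewrite -mulrA -natrM mulnb andbb.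
pose G a b := ((a, b) \in E)%:R * ((b, a) \in E)%:R * (b == i)%:R : R.
rewrite big_mkcond (eq_bigr (fun p => G p.1 p.2)); last first.
  by move=> [a b] _; rewrite /G; case: ((a, b) \in E); rewrite ?mul1r ?mul0r ?mulrA.
rewrite -(pair_big xpredT xpredT G); apply: eq_bigr => a _.
by rewrite sum_delta_r mulrC.
Qed.

End Incidence.

Definition hashimoto_pencil (R : comNzRingType) (n : nat) (E : {set 'I_n * 'I_n})
    (tau t : R) : 'M[R]_#|E| :=
  1%:M - t *: (tau *: hashimoto R E + (1 - tau) *: linemx R E).

Ltac expand_mulmx :=
  repeat progress rewrite
    ?(mulmxDl, mulmxDr, mulmxBl, mulmxBr, mulNmx, mulmxN, mul1mx, mulmx1)
    -?scalemxAl -?scalemxAr.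

Section Pencil.
Variables (R : comNzRingType) (n : nat) (E : {set 'I_n * 'I_n}).
Local Notation m := #|E|.
Local Notation Delta := (revmx R E).
Local Notation Q := (recipdiag R E).

(* (1 - s^2) (1 + s Delta)^-1 *)
Definition revmx_coinv (s : R) : 'M[R]_m :=
  (1 - s ^+ 2) *: (1%:M - Q) + Q - s *: Delta.

Lemma revmx_coinvP (s : R) :
  revmx_coinv s *m (1%:M + s *: Delta) = (1 - s ^+ 2)%:M.
Proof.
rewrite /revmx_coinv; expand_mulmx.
rewrite revmx_sqr recipdiag_revmx.
move: Delta Q => D Q'; apply/matrixP => e f; rewrite !mxE.
by case: (e == f); rewrite /= ?mulr1n ?mulr0n; ring.
Qed.

Lemma det_hashimoto_pencil_revmx (tau t : R) :
  (1 - tau ^+ 2 * t ^+ 2) ^+ n * \det (hashimoto_pencil E tau t)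
  = \det (1%:M + (tau * t) *: Delta) * \det (Mtau E tau t).
Proof.
have pencilE : hashimoto_pencil E tau t
               = 1%:M + (tau * t) *: Delta - (t *: tgtmx R E) *m (srcmx R E)^T.
  rewrite /hashimoto_pencil /hashimoto linemx_factor -scalemxAl.
  move: Delta (tgtmx R E *m _) => D W; apply/matrixP => e f; rewrite !mxE.
  by case: (e == f); rewrite /= ?mulr1n ?mulr0n; ring.
have MtauE : Mtau E tau t = (1 - (tau * t) ^+ 2)%:M
               - (srcmx R E)^T *m revmx_coinv (tau * t) *m (t *: tgtmx R E).
  rewrite /revmx_coinv; expand_mulmx.
  rewrite adjmx_factor recipmx_factor diagA2_factor /Mtau.
  move: (adjmx R E) (recipmx R E) (diagA2 R E) => A S D.
  apply/matrixP => i j; rewrite !mxE.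
  by case: (i == j); rewrite /= ?mulr1n ?mulr0n; ring.
rewrite pencilE MtauE -exprMn.
exact: det_subr_mulmx (revmx_coinvP _).
Qed.

End Pencil.

Section RevPencil.
Variables (R : comNzRingType) (n : nat) (E : {set 'I_n * 'I_n}).
Hypothesis E_loopless : loopless E.
Local Notation m := #|E|.
Local Notation Delta := (revmx R E).

Lemma card_reciprocal :
  #|[set x in E | rev_pair x \in E]| = (nrecip E + nrecip E)%N.
Proof.
set B := [set p : 'I_n * 'I_n | [&& (p.1 < p.2)%N, p \in E & (p.2, p.1) \in E]].
set C := [set x in E | rev_pair x \in E].
rewrite -(cardsID B C).
have -> : C :&: B = B.
  by apply/setIidPr/subsetP => p; rewrite !inE => /and3P[_ -> ->].
have -> : C :\: B = rev_pair @: B.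
  rewrite (can_imset_pre _ rev_pairK); apply/setP => -[a b]; rewrite !inE /=.
  case abE: ((a, b) \in E); last by rewrite !andbF.
  case baE: ((b, a) \in E); last by rewrite !andbF.
  rewrite !andbT; case: (ltngtP a b) => // /val_inj ab.
  by move: (E_loopless a); rewrite {2}ab abE.
by rewrite card_imset //; apply: (can_inj rev_pairK).
Qed.

Lemma det_sub_recipdiag (s : R) :
  \det (1%:M - s *: recipdiag R E) = (1 - s) ^+ (nrecip E + nrecip E).
Proof.
have -> : 1%:M - s *: recipdiag R E = diag_mx (\row_e (1 - s * (reciprocal e)%:R)).
  apply/matrixP => e f; rewrite !mxE.
  by case: (e == f); rewrite ?mulr1n ?mulr0n ?mulr0 ?subr0.
rewrite det_diag (eq_bigr (fun e => 1 - s * (rev_pair (edge E e) \in E)%:R));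
  last by move=> e _; rewrite mxE.
rewrite (big_edge E (fun x => 1 - s * (rev_pair x \in E)%:R)).
rewrite -card_reciprocal -prodr_const big_mkcond [RHS]big_mkcond.
apply: eq_bigr => x _; rewrite inE.
by case: (x \in E); case: (rev_pair x \in E); rewrite ?mulr1 ?mulr0 ?subr0.
Qed.

(* Of an edge and its reverse exactly one is increasing, E being loopless. *)
Definition edge_sign (e : 'I_m) : R :=
  if ((edge E e).1 < (edge E e).2)%N then -1 else 1.

Lemma edge_sign_sqr e : edge_sign e * edge_sign e = 1.
Proof. by rewrite /edge_sign; case: ifP; rewrite ?mulrNN mulr1. Qed.

Lemma edge_sign_rev e f :
  edge E f = rev_pair (edge E e) -> edge_sign f = - edge_sign e.
Proof.
rewrite /edge_sign => ->; have := E_loopless (edge E e).1.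
case: (edge E e) (edge_in e) => a b /= abE.
case: (ltngtP a b) => [| |/val_inj ab]; rewrite ?opprK //.
by rewrite {2}ab abE.
Qed.

Definition edge_signmx : 'M[R]_m := diag_mx (\row_e edge_sign e).

Lemma edge_signmx_sqr : edge_signmx *m edge_signmx = 1%:M.
Proof.
rewrite mul_diag_mx; apply/matrixP => e f; rewrite !mxE.
by case: (e == f); rewrite ?mulr1n ?mulr0n ?mulr0 ?edge_sign_sqr.
Qed.

Lemma edge_signmx_conj : edge_signmx *m Delta *m edge_signmx = - Delta.
Proof.
set d := \row_e edge_sign e; have dE e : d 0 e = edge_sign e by rewrite mxE.
rewrite mul_diag_mx mul_mx_diag; apply/matrixP => e f.
rewrite [LHS]mxE [X in X * _]mxE [RHS]mxE !dE.
have [->|/revmx_neq0 ef] := eqVneq (revmx R E e f) 0.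
  by rewrite mulr0 mul0r oppr0.
by rewrite (edge_sign_rev ef) mulrN mulrAC edge_sign_sqr mul1r.
Qed.

Lemma det_revmx_pencilN (s : R) :
  \det (1%:M - s *: Delta) = \det (1%:M + s *: Delta).
Proof.
have -> : 1%:M - s *: Delta = edge_signmx *m (1%:M + s *: Delta) *m edge_signmx.
  rewrite mulmxDr mulmxDl mulmx1 edge_signmx_sqr -scalemxAr -scalemxAl.
  by rewrite edge_signmx_conj scalerN.
by rewrite !det_mulmx mulrAC -det_mulmx edge_signmx_sqr det1 mul1r.
Qed.

Lemma sqr_det_revmx_pencil (s : R) :
  \det (1%:M + s *: Delta) ^+ 2 = (1 - s ^+ 2) ^+ (nrecip E + nrecip E).
Proof.
rewrite expr2 -{2}det_revmx_pencilN -det_mulmx -det_sub_recipdiag; congr (\det _).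
rewrite mulmxDl !mulmxBr !mul1mx mulmx1 -scalemxAl -scalemxAr scalerA.
by rewrite revmx_sqr -expr2 addrA subrK.
Qed.

End RevPencil.

Section MapGraphMatrices.
Variables (R1 R2 : comNzRingType) (f : {rmorphism R1 -> R2}).
Variables (n : nat) (E : {set 'I_n * 'I_n}).

Lemma map_adjmx : map_mx f (adjmx R1 E) = adjmx R2 E.
Proof. by apply/matrixP => i j; rewrite !mxE rmorph_nat. Qed.

Lemma map_linemx : map_mx f (linemx R1 E) = linemx R2 E.
Proof. by apply/matrixP => i j; rewrite !mxE rmorph_nat. Qed.

Lemma map_revmx : map_mx f (revmx R1 E) = revmx R2 E.
Proof. by apply/matrixP => i j; rewrite !mxE rmorphM !rmorph_nat. Qed.

Lemma map_recipmx : map_mx f (recipmx R1 E) = recipmx R2 E.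
Proof. by apply/matrixP => i j; rewrite !mxE rmorphM !rmorph_nat. Qed.

Lemma map_diagA2 : map_mx f (diagA2 R1 E) = diagA2 R2 E.
Proof.
apply/matrixP => i j; rewrite !mxE rmorphM rmorph_nat rmorph_sum; congr (_ * _).
by apply: eq_bigr => k _; rewrite !mxE rmorphM !rmorph_nat.
Qed.

Lemma map_hashimoto_pencil (tau t : R1) :
  map_mx f (hashimoto_pencil E tau t) = hashimoto_pencil E (f tau) (f t).
Proof.
rewrite /hashimoto_pencil /hashimoto.
by rewrite !(map_mxB, map_mxD, map_mxZ, map_mx1, rmorphB, rmorph1) map_linemx map_revmx.
Qed.

Lemma map_Mtau (tau t : R1) : map_mx f (Mtau E tau t) = Mtau E (f tau) (f t).
Proof.
rewrite /Mtau.
rewrite !(map_mxD, map_mxB, map_mxN, map_mxZ, map_mx1, map_scalar_mx, rmorphM, rmorphXn).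
by rewrite map_adjmx map_recipmx map_diagA2.
Qed.

End MapGraphMatrices.

Section IntegralDomain.
Variables (K : idomainType) (n : nat) (E : {set 'I_n * 'I_n}).
Hypotheses (two_neq0 : (2 : K) != 0) (E_loopless : loopless E).

Lemma det_revmx_pencil (s : K) :
  \det (1%:M + s *: revmx K E) = (1 - s ^+ 2) ^+ nrecip E.
Proof.
set p := \det (1%:M + 'X *: revmx {poly K} E).
have p_eval z : p.[z] = \det (1%:M + z *: revmx K E).
  rewrite -horner_evalE -det_map_mx map_mxD map_mx1 map_mxZ map_revmx.
  by rewrite /= horner_evalE hornerX.
set q : {poly K} := (1 - 'X ^+ 2) ^+ nrecip E.
have : (p == q) || (p == - q).
  by rewrite -eqf_sqr sqr_det_revmx_pencil // -exprM muln2 -addnn.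
case/orP=> /eqP p_eq; first by rewrite -p_eval p_eq !(hornerE, horner_exp).
(* p.[0] = 1 but (- q).[0] = -1, and these differ as 2 != 0 *)
have := p_eval 0.
rewrite p_eq scale0r addr0 det1 !(hornerE, horner_exp) expr0n subr0 expr1n => /eqP.
by rewrite eq_sym -subr_eq0 opprK -mulr2n (negPf two_neq0).
Qed.

Lemma det_hashimoto_pencil_scaled (tau t : K) :
  (1 - tau ^+ 2 * t ^+ 2) ^+ n * \det (hashimoto_pencil E tau t)
  = (1 - tau ^+ 2 * t ^+ 2) ^+ nrecip E * \det (Mtau E tau t).
Proof. by rewrite det_hashimoto_pencil_revmx det_revmx_pencil // exprMn. Qed.

End IntegralDomain.

Lemma det_hashimoto_pencil (K : idomainType) (n : nat) (E : {set 'I_n * 'I_n})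
    (tau t : K) :
  (2 : K) != 0 -> loopless E -> (n <= nrecip E)%N ->
  \det (hashimoto_pencil E tau t)
  = (1 - tau ^+ 2 * t ^+ 2) ^+ (nrecip E - n) * \det (Mtau E tau t).
Proof.
move=> two_neq0 E_loopless le_n_b.
set x : {poly K} := 1 - tau%:P ^+ 2 * 'X ^+ 2.
have x_neq0 : x != 0.
  apply/negP => /eqP/(congr1 (horner_eval 0))/eqP.
  rewrite rmorph0 horner_evalE hornerD hornerN hornerC hornerM hornerXn.
  by rewrite expr0n mulr0 subr0 oner_eq0.
have two_poly : (2 : {poly K}) != 0 by rewrite -polyC_natr polyC_eq0; exact: two_neq0.
have := det_hashimoto_pencil_scaled two_poly E_loopless tau%:P 'X.
set k := (nrecip E - n)%N; have b_eq : nrecip E = (n + k)%N by rewrite subnKC.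
rewrite -/x b_eq exprD -mulrA => /(mulfI (expf_neq0 _ x_neq0)).
move=> /(congr1 (horner_eval t)).
rewrite -!det_map_mx map_hashimoto_pencil rmorphM -det_map_mx map_Mtau.
by rewrite rmorphXn rmorphB rmorph1 rmorphM !rmorphXn /= !horner_evalE hornerC hornerX.
Qed.

Theorem theorem4p9 (R : realFieldType) (n : nat) (E : {set 'I_n * 'I_n})
  (tau t : R) :
  loopless E -> 0 <= tau -> tau <= 1 ->
  ((nrecip E < n)%N -> 1 - tau ^+ 2 * t ^+ 2 != 0) ->
  \det (1%:M - t *: (tau *: hashimoto R E + (1 - tau) *: linemx R E))
  = (1 - tau ^+ 2 * t ^+ 2) ^ ((nrecip E)%:Z - n%:Z) * \det (Mtau E tau t).
Proof.
move=> E_loopless _ _ x_neq0_if_lt.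
have two_neq0 : (2 : R) != 0 by rewrite pnatr_eq0.
rewrite -/(hashimoto_pencil E tau t).
set x := 1 - tau ^+ 2 * t ^+ 2 in x_neq0_if_lt *.
have [x0|x_neq0] := eqVneq x 0.
  have le_n_b : (n <= nrecip E)%N.
    by rewrite leqNgt; apply/negP => /x_neq0_if_lt; rewrite x0 eqxx.
  by rewrite subzn //; apply: det_hashimoto_pencil.
apply: (mulfI (expf_neq0 n x_neq0)).
rewrite (det_hashimoto_pencil_scaled two_neq0 E_loopless) -/x [RHS]mulrA.
rewrite -[x ^+ n]/(x ^ n%:Z) -expfzDr //.
by rewrite addrC subrK.
Qed.
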